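(* Let $K\ge 2$, let $\Delta^{K-1}=\{\boldsymbol{p}\in[0,1]^K:\sum_{k=1}^K p_k=1\}$, and let $\boldsymbol{\alpha}=(\alpha_1,\dots,\alpha_K)$ with $\alpha_k>1$ for all $k$ and $\alpha_0=\sum_{k=1}^K\alpha_k$. Let $g(\boldsymbol{p})=\alpha_0^{\alpha_0}\prod_{k=1}^K (p_k/\alpha_k)^{\alpha_k}$ be the Dirichlet possibility function with parameter $\boldsymbol{\alpha}$, so that $\log g(\boldsymbol{p})=\alpha_0\log\alpha_0+\sum_{k=1}^K\alpha_k\log(p_k/\alpha_k)$. Let $\boldsymbol{y}\in\{0,1\}^K$ be a one-hot label vector and let $\ell(\boldsymbol{p},\boldsymbol{y})=-\sum_{k=1}^K y_k\log p_k$ be the cross-entropy loss. Then the maximiser $$\tilde{\boldsymbol{p}}^*=\arg\max_{\boldsymbol{p}\in\Delta^{K-1}}\big[\log g(\boldsymbol{p})+\ell(\boldsymbol{p},\boldsymbol{y})\big]$$ is given by $$\tilde{\boldsymbol{p}}^*=\frac{1}{\alpha_0-1}(\boldsymbol{\alpha}-\boldsymbol{y}).$$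
   Context: In the paper, $\boldsymbol{\alpha}=\Phi'_{\boldsymbol{\psi}}(\boldsymbol{x})$ is the output of a neural network for an input $\boldsymbol{x}$, and $g=g_{\boldsymbol{\psi}}(\cdot\mid\boldsymbol{x})$ is the learned Dirichlet possibility function on the probability simplex; the result concerns only the fixed vector $\boldsymbol{\alpha}$. Convention: $\alpha_k^{\alpha_k}=1$ when $\alpha_k=0$ (not needed here since $\alpha_k>1$). *)

From HB Require Import structures.
From mathcomp Require Import all_boot all_order all_algebra.
From mathcomp Require Import all_classical all_reals all_analysis.
Set Implicit Arguments. Unset Strict Implicit. Unset Printing Implicit Defensive.
Import Order.TTheory GRing.Theory Num.Theory.
Local Open Scope ring_scope.

Definition in_simplex (R : realType) (K : nat) (p : 'I_K -> R) : Prop :=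
  (forall k, 0 <= p k <= 1) /\ \sum_(k < K) p k = 1.

Definition alpha0 (R : realType) (K : nat) (alpha : 'I_K -> R) : R :=
  \sum_(k < K) alpha k.

Definition dirichlet_poss (R : realType) (K : nat) (alpha p : 'I_K -> R) : R :=
  (alpha0 alpha) `^ (alpha0 alpha) * \prod_(k < K) (p k / alpha k) `^ (alpha k).

Definition one_hot (R : realType) (K : nat) (y : 'I_K -> R) : Prop :=
  exists j : 'I_K, forall k, y k = (k == j)%:R.

Definition cross_entropy (R : realType) (K : nat) (p y : 'I_K -> R) : R :=
  - \sum_(k < K) y k * ln (p k).

(* Objective log g(p) + l(p, y) (used on the interior of the simplex). *)
Definition objective (R : realType) (K : nat) (alpha y p : 'I_K -> R) : R :=
  ln (dirichlet_poss alpha p) + cross_entropy p y.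

(** The objective equals a constant plus [\sum_k b_k ln p_k] with weights
    [b = alpha - y], which are positive since [alpha_k > 1 >= y_k], and which
    sum to [alpha_0 - 1] since [y] is one-hot.  By the weighted Gibbs
    inequality, obtained by summing the tangent bounds
    [b_k ln p_k <= b_k ln q_k + b_k (p_k / q_k - 1)] with [q = b / \sum b],
    this sum is uniquely maximised on the simplex at [p = q]. *)
From HB Require Import structures.
From mathcomp Require Import all_boot all_order all_algebra.
From mathcomp Require Import all_classical all_reals all_analysis.
From mathcomp Require Import ring lra.
Import Order.TTheory GRing.Theory Num.Theory.
Local Open Scope ring_scope.

Section Logarithm.
Context {R : realType}.

Lemma ln_prod (I : Type) (r : seq I) (P : pred I) (F : I -> R) :
  (forall i, P i -> 0 < F i) ->
  ln (\prod_(i <- r | P i) F i) = \sum_(i <- r | P i) ln (F i).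
Proof.
move=> F_gt0.
suff [] : \sum_(i <- r | P i) ln (F i) = ln (\prod_(i <- r | P i) F i)
          /\ 0 < \prod_(i <- r | P i) F i by [].
apply: (big_ind2 (fun s m => s = ln m /\ 0 < m)).
- by rewrite ln1.
- move=> s1 s2 m1 m2 [-> m1_gt0] [-> m2_gt0]; split; last exact: mulr_gt0.
  by rewrite lnM ?posrE.
- by move=> i /F_gt0.
Qed.

Lemma ln_lt_sub1 (t : R) : 0 < t -> t != 1 -> ln t < t - 1.
Proof.
move=> t_gt0 t_neq1; have : ln t != 0 by rewrite ln_eq0.
by move=> /expR_gt1Dx; rewrite lnK ?posrE // ltrBrDl.
Qed.

Lemma ln_lt_tangent (q x : R) : 0 < q -> 0 < x -> x != q ->
  ln x < ln q + (x / q - 1).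
Proof.
move=> q_gt0 x_gt0 x_neq_q.
have : ln (x / q) < x / q - 1.
  apply: ln_lt_sub1; first by rewrite divr_gt0.
  apply: contra x_neq_q => /eqP xq1.
  by rewrite -(divfK (lt0r_neq0 q_gt0) x) xq1 mul1r.
rewrite ln_div ?posrE //; lra.
Qed.

Lemma ln_le_tangent (q x : R) : 0 < q -> 0 < x -> ln x <= ln q + (x / q - 1).
Proof.
move=> q_gt0 x_gt0; have [-> | x_neq_q] := eqVneq x q.
  by rewrite divff ?gt_eqF // subrr addr0.
exact/ltW/ln_lt_tangent.
Qed.

End Logarithm.

Definition normalize {R : realType} {I : finType} (b : I -> R) : I -> R :=
  fun i => b i / \sum_j b j.

Section WeightedGibbs.
Context {R : realType} {I : finType} {b : I -> R}.
Hypothesis b_gt0 : forall i, 0 < b i.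

Lemma le_weight_sum (i : I) : b i <= \sum_j b j.
Proof. by rewrite (bigD1 i) //= lerDl sumr_ge0 // => j _; exact: ltW. Qed.

Lemma weight_sum_gt0 (i : I) : 0 < \sum_j b j.
Proof. exact: lt_le_trans (b_gt0 i) (le_weight_sum i). Qed.

Lemma normalize_gt0 (i : I) : 0 < normalize b i.
Proof. by rewrite divr_gt0 // (weight_sum_gt0 i). Qed.

Lemma normalize_le1 (i : I) : normalize b i <= 1.
Proof. by rewrite ler_pdivrMr ?mul1r ?le_weight_sum // (weight_sum_gt0 i). Qed.

Lemma sum_normalize (i0 : I) : \sum_i normalize b i = 1.
Proof. by rewrite -mulr_suml divff // gt_eqF // (weight_sum_gt0 i0). Qed.

Lemma weighted_gibbs_lt (p : I -> R) :
  (forall i, 0 < p i) -> \sum_i p i = 1 -> p <> normalize b ->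
  \sum_i b i * ln (p i) < \sum_i b i * ln (normalize b i).
Proof.
move=> p_gt0 sum_p p_neq.
have [i0 p_neq_i0] : exists i, p i != normalize b i.
  apply: contra_notP p_neq => p_eq; apply: funext => i.
  by apply/eqP; apply: contra_notT p_eq => ?; exists i.
have B_gt0 := weight_sum_gt0 i0.
pose B := \sum_j b j.
have tangent_sum_eq0 : \sum_i b i * (p i / normalize b i - 1) = 0.
  rewrite (eq_bigr (fun i => B * p i - b i)); last first.
    by move=> i _; rewrite /normalize -/B; field; rewrite !gt_eqF.
  by rewrite sumrB -mulr_sumr sum_p mulr1 subrr.
suff : \sum_i b i * ln (p i)
       < \sum_i (b i * ln (normalize b i) + b i * (p i / normalize b i - 1)).
  by rewrite big_split /= tangent_sum_eq0 addr0.
rewrite (bigD1 i0) //= [X in _ < X](bigD1 i0) //= -mulrDr.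
apply: ltr_leD; first by rewrite ltr_pM2l // ln_lt_tangent ?normalize_gt0.
apply: ler_sum => i _; rewrite -mulrDr ler_pM2l //.
exact: ln_le_tangent (normalize_gt0 i) (p_gt0 i).
Qed.

End WeightedGibbs.

Lemma in_simplex_normalize {R : realType} {K : nat} (b : 'I_K -> R) (i0 : 'I_K) :
  (forall k, 0 < b k) -> in_simplex (normalize b).
Proof.
move=> b_gt0; split; last exact: sum_normalize i0.
by move=> k; rewrite ltW ?normalize_le1 ?normalize_gt0.
Qed.

Lemma one_hot_bounds {R : realType} {K : nat} {y : 'I_K -> R} :
  one_hot y -> forall k, 0 <= y k <= 1.
Proof. by move=> [j yE] k; rewrite yE; case: (k == j); rewrite /= ?lexx ?ler01. Qed.

Lemma one_hot_sum {R : realType} {K : nat} {y : 'I_K -> R} :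
  one_hot y -> \sum_k y k = 1.
Proof.
move=> [j yE]; rewrite (bigD1 j) //= yE eqxx big1 ?addr0 // => k /negbTE.
by rewrite yE => ->.
Qed.

Lemma objectiveE {R : realType} {K : nat} (alpha y p : 'I_K -> R) :
  (forall k, 0 < alpha k) -> (forall k, 0 < p k) -> 0 < alpha0 alpha ->
  objective alpha y p = alpha0 alpha * ln (alpha0 alpha)
     - \sum_k alpha k * ln (alpha k) + \sum_k (alpha k - y k) * ln (p k).
Proof.
move=> alpha_gt0 p_gt0 alpha0_gt0.
have ratio_gt0 k : 0 < (p k / alpha k) `^ alpha k by rewrite powR_gt0 ?divr_gt0.
rewrite /objective /dirichlet_poss /cross_entropy.
rewrite lnM ?posrE ?powR_gt0 ?prodr_gt0 // ln_powR ln_prod //.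
under eq_bigr do rewrite ln_powR ln_div ?posrE // mulrBr.
under [X in _ = _ + X]eq_bigr do rewrite mulrBl.
rewrite !sumrB; ring.
Qed.

Theorem proposition1 (R : realType) (K : nat) (hK : (2 <= K)%N)
  (alpha : 'I_K -> R) (halpha : forall k, 1 < alpha k)
  (y : 'I_K -> R) (hy : one_hot y) :
  let pstar := fun k => (alpha k - y k) / (alpha0 alpha - 1) in
  in_simplex pstar /\ (forall k, 0 < pstar k) /\
  (forall p : 'I_K -> R, in_simplex p -> (forall k, 0 < p k) -> p <> pstar ->
     objective alpha y p < objective alpha y pstar).
Proof.
move=> pstar; have [j _] := hy.
pose b k := alpha k - y k.
have b_gt0 k : 0 < b k.
  by have := halpha k; have /andP[_ yk_le1] := one_hot_bounds hy k; rewrite /b; lra.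
have alpha0E : alpha0 alpha - 1 = \sum_k b k by rewrite sumrB (one_hot_sum hy).
have alpha_gt0 k : 0 < alpha k by apply: lt_trans (halpha k).
have alpha0_gt0 : 0 < alpha0 alpha.
  by have := weight_sum_gt0 b_gt0 j; rewrite -alpha0E; lra.
have -> : pstar = normalize b by rewrite /pstar alpha0E.
have q_gt0 := normalize_gt0 b_gt0.
split; first exact: in_simplex_normalize j b_gt0.
split; first exact: q_gt0.
move=> p [_ sum_p] p_gt0 p_neq.
by rewrite !objectiveE // ltrD2l; apply: weighted_gibbs_lt.
Qed.
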